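(* Let $G$ be a topological group and let $H\in\mathrm{RUEB}(L^0(G))$. Then $[H]\in\mathrm{RUEB}(G)$, where $$[H]=\{f\circ h_n\circ c_{i,a} : f\in H,\ n\in\mathbb N\setminus\{0\},\ i\in\{1,\dots,n\},\ a\in G^{n-1}\}.$$
   Context: For a topological group $K$, equip $K$ with its right uniformity (basic entourages $\{(x,y): xy^{-1}\in U\}$, $U$ an identity neighbourhood); $\mathrm{RUC}_b(K)$ denotes the bounded real functions on $K$ uniformly continuous for it, and $\mathrm{RUEB}(K)$ the set of subsets of $\mathrm{RUC}_b(K)$ that are norm-bounded and uniformly equicontinuous (for every $\epsilon>0$ there is an identity neighbourhood $U$ with $|f(x)-f(y)|\le\epsilon$ for all $f$ in the set and all $x,y$ with $xy^{-1}\in U$). Let $\lambda$ be Lebesgue measure on $[0,1]$. $L^{0}(G)$ is the group of $\lambda$-a.e. equivalence classes of strongly $\lambda$-measurable maps $[0,1]\to G$ (maps $f$ such that for every $\epsilon>0$ there is a closed $A$ with $\lambda([0,1]\setminus A)\le\epsilon$ and $f|_A$ continuous), with pointwise operations and the topology of convergence in measure, whose identity neighbourhood basis consists of $N(U,\epsilon)=\{f:\lambda(\{x: f(x)\notin U\})<\epsilon\}$, $U$ an open identity neighbourhood in $G$, $\epsilon>0$. For $n\ge1$, $h_n\colon G^n\to L^0(G)$ sends $(g_1,\dots,g_n)$ to the map constantly $g_j$ on $[(j-1)/n,j/n)$, $j=1,\dots,n$. For $i\in\{1,\dots,n\}$ and $a\in G^{n-1}$, $c_{i,a}\colon G\to G^n$,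 $x\mapsto(a_1,\dots,a_{i-1},x,a_i,\dots,a_{n-1})$. *)

From HB Require Import structures.
From mathcomp Require Import all_boot all_order all_algebra.
From mathcomp Require Import all_classical all_reals all_analysis.
Set Implicit Arguments. Unset Strict Implicit. Unset Printing Implicit Defensive.
Import Order.TTheory GRing.Theory Num.Theory numFieldNormedType.Exports.
Local Open Scope classical_set_scope.
Local Open Scope ring_scope.

Definition is_topgroup (G : topologicalType) (mul : G -> G -> G)
    (inv : G -> G) (e : G) : Prop :=
  [/\ (forall x y z, mul x (mul y z) = mul (mul x y) z),
      (forall x, mul e x = x /\ mul x e = x),
      (forall x, mul (inv x) x = e /\ mul x (inv x) = e),
      continuous (fun p : G * G => mul p.1 p.2) &
      continuous inv].

Section Defs.
Context (R : realType) (G : topologicalType) (mul : G -> G -> G)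
  (inv : G -> G) (e : G).

Definition RUCb (f : G -> R) : Prop :=
  (exists M : R, forall x, `|f x| <= M) /\
  (forall eps : R, 0 < eps -> exists U : set G, nbhs e U /\
     forall x y, U (mul x (inv y)) -> `|f x - f y| <= eps).

Definition RUEB (H : set (G -> R)) : Prop :=
  [/\ H `<=` RUCb,
      (exists M : R, forall f, H f -> forall x, `|f x| <= M) &
      (forall eps : R, 0 < eps -> exists U : set G, nbhs e U /\
         forall f x y, H f -> U (mul x (inv y)) -> `|f x - f y| <= eps)].

Definition unit_interval : set R := `[0%R, 1%R].

(* strongly lambda-measurable maps [0,1] -> G (represented as maps R -> G,
   only the values on [0,1] matter) *)
Definition strongly_measurable (x : R -> G) : Prop :=
  forall eps : R, 0 < eps -> exists A : set R,
    [/\ closed A, A `<=` unit_interval,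
        (lebesgue_measure (unit_interval `\` A) <= eps%:E)%E &
        {within A, continuous x}].

(* lambda-a.e. equality on [0,1] (the equivalence defining L^0(G)) *)
Definition ae_eq01 (x y : R -> G) : Prop :=
  (@lebesgue_measure R).-negligible [set t | unit_interval t /\ x t <> y t].

(* A real function on L^0(G) is represented as a function on maps R -> G whose
   values on strongly measurable maps depend only on the a.e.-class. *)
Definition L0fun (f : (R -> G) -> R) : Prop :=
  forall x y, strongly_measurable x -> strongly_measurable y ->
    ae_eq01 x y -> f x = f y.

(* Basic identity neighbourhoods N(U, eps) of L^0(G), applied to x y^{-1}
   (pointwise operations) *)
Definition in_N (U : set G) (delta : R) (z : R -> G) : Prop :=
  (lebesgue_measure [set t | unit_interval t /\ ~ U (z t)] < delta%:E)%E.

Definition RUCb_L0 (f : (R -> G) -> R) : Prop :=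
  [/\ L0fun f,
      (exists M : R, forall x, strongly_measurable x -> `|f x| <= M) &
      (forall eps : R, 0 < eps -> exists (U : set G) (delta : R),
         [/\ open U, U e, 0 < delta &
         forall x y, strongly_measurable x -> strongly_measurable y ->
           in_N U delta (fun t => mul (x t) (inv (y t))) ->
           `|f x - f y| <= eps])].

Definition RUEB_L0 (H : set ((R -> G) -> R)) : Prop :=
  [/\ H `<=` RUCb_L0,
      (exists M : R, forall f, H f -> forall x, strongly_measurable x ->
          `|f x| <= M) &
      (forall eps : R, 0 < eps -> exists (U : set G) (delta : R),
         [/\ open U, U e, 0 < delta &
         forall f x y, H f -> strongly_measurable x -> strongly_measurable y ->
           in_N U delta (fun t => mul (x t) (inv (y t))) ->
           `|f x - f y| <= eps])].

(* h_{n+1} : G^{n+1} -> L^0(G): constantly g_j on [j/(n+1), (j+1)/(n+1))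
   (0-indexed j); the value at t = 1 (a null set) is taken to be g_n. *)
Definition hn (n : nat) (g : 'I_n.+1 -> G) : R -> G :=
  fun t => g (inord (minn (Num.truncn (t * n.+1%:R)) n)).

(* c_{i,a} : G -> G^{n+1}, inserting x at (0-indexed) position i into
   a in G^n. *)
Definition cia (n : nat) (i : 'I_n.+1) (a : 'I_n -> G) (x : G) : 'I_n.+1 -> G :=
  fun k => match unlift i k with None => x | Some j => a j end.

Definition bracket (H : set ((R -> G) -> R)) : set (G -> R) :=
  [set g | exists f, H f /\ exists n (i : 'I_n.+1) (a : 'I_n -> G),
     g = fun x => f (hn (cia i a x))].

End Defs.

From mathcomp Require Import all_boot all_order all_algebra.
From mathcomp Require Import all_classical all_reals all_analysis.
From mathcomp Require Import lra measurable_realfun.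
Set Implicit Arguments. Unset Strict Implicit. Unset Printing Implicit Defensive.
Import Order.TTheory GRing.Theory Num.Theory numFieldNormedType.Exports.
Local Open Scope classical_set_scope.
Local Open Scope ring_scope.

(* A step map h_n(g) is locally constant off small balls around its finitely
   many jump points, and these balls have arbitrarily small total measure; so
   h_n(g) is strongly measurable.  For c = c_{i,a}, the pointwise quotient
   h_n(c x) h_n(c y)^-1 is x y^-1 on the i-th block and e elsewhere, so when an
   identity neighbourhood U contains x y^-1 it lies in every N(U, delta): the
   uniform bound and uniform equicontinuity of H pass verbatim to [H]. *)

Definition step_index (R : realType) (n : nat) (t : R) : nat :=
  minn (Num.truncn (t * n.+1%:R)) n.

Lemma step_index_jump (R : realType) (n : nat) (u v : R) :
  (step_index n u < step_index n v)%N ->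
  exists2 k, (k < n)%N & u < k.+1%:R / n.+1%:R <= v.
Proof.
rewrite /step_index; set m := Num.truncn (u * n.+1%:R) => lt_uv.
have lt_mn : (m < n)%N.
  by rewrite ltnNge; apply: contraTN lt_uv => /minn_idPr->; rewrite -leqNgt geq_minr.
move: lt_uv; rewrite (minn_idPl (ltnW lt_mn)) leq_min => /andP[lt_mv _].
exists m => //.
have n1_gt0 : (0 : R) < n.+1%:R by rewrite ltr0n.
rewrite ltr_pdivlMr // ler_pdivrMr // truncnS_gt /=.
by rewrite -truncn_gt_nat.
Qed.

Lemma step_index_eq (R : realType) (n : nat) (d s t : R) :
  ~ (\bigcup_(k < n) ball (k.+1%:R / n.+1%:R : R) d) t ->
  `|t - s| < d -> step_index n s = step_index n t.
Proof.
move=> t_far; rewrite ltr_norml => /andP[st1 st2].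
have [lt_st|lt_ts|//] := ltngtP (step_index n s) (step_index n t); exfalso.
- have [k lt_kn /andP[c1 c2]] := step_index_jump lt_st.
  apply: t_far; exists k => //; rewrite /ball /= ltr_distlC.
  set c := _ / _ in c1 c2 *; apply/andP; split; lra.
- have [k lt_kn /andP[c1 c2]] := step_index_jump lt_ts.
  apply: t_far; exists k => //; rewrite /ball /= ltr_distlC.
  set c := _ / _ in c1 c2 *; apply/andP; split; lra.
Qed.

Lemma within_continuous_locally_constant (R : realType) (T : topologicalType)
    (A : set R) (f : R -> T) :
  (forall t, A t -> exists2 d, 0 < d & forall s, A s -> `|t - s| < d -> f s = f t) ->
  {within A, continuous f}.
Proof.
move=> loc_cst; apply/subspace_continuousP => t At W /= Wft.
have [d d_gt0 f_cst] := loc_cst t At.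
apply/nbhs_ballP; exists d => //= s ts As.
by rewrite /from_subspace /= f_cst //; exact: nbhs_singleton.
Qed.

Lemma lebesgue_measure_bigcup_ball_le (R : realType) (n : nat) (c : nat -> R) (d : R) :
  0 <= d -> (lebesgue_measure (\bigcup_(k < n) ball (c k) d) <= (d *+ 2 *+ n)%:E)%E.
Proof.
move=> d_ge0; rewrite bigcup_mkord.
apply: le_trans (Boole_inequality lebesgue_measure (fun k _ => measurable_ball (c k) d)) _.
rewrite (eq_bigr (fun=> (d *+ 2)%:E)); last by move=> k _; exact: lebesgue_measure_ball.
by rewrite sumEFin sumr_const card_ord.
Qed.

Lemma strongly_measurable_step (R : realType) (G : topologicalType) (n : nat)
    (F : nat -> G) :
  strongly_measurable (fun t : R => F (step_index n t)).
Proof.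
move=> eps eps_gt0.
pose d := eps / (2 * n.+1)%:R.
have d_gt0 : 0 < d by rewrite divr_gt0 // ltr0n.
pose J := \bigcup_(k < n) ball (k.+1%:R / n.+1%:R : R) d.
have J_open : open J by apply: bigcup_open => k _; exact: ball_open.
exists (@unit_interval R `\` J); split.
- by apply: closedI; [exact: interval_closed | exact: open_closedC].
- by move=> t [].
- apply: (@le_trans _ _ (lebesgue_measure J)).
    apply: le_measure; rewrite ?inE.
    + by apply: measurableD; [exact: measurable_itv | apply: measurableD;
        [exact: measurable_itv | exact: open_measurable]].
    + exact: open_measurable.
    + by move=> t [Ut not_UJt]; apply: contrapT => Jt; exact: not_UJt.
  apply: le_trans (lebesgue_measure_bigcup_ball_le n _ (ltW d_gt0)) _.
  have -> : eps = d *+ 2 *+ n.+1 by rewrite -mulrnA -mulr_natr divfK ?pnatr_eq0.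
  by rewrite lee_fin ler_pMn2l // mulrn_wgt0.
- apply: within_continuous_locally_constant => t [_ not_Jt].
  by exists d => // s _ ts; rewrite (step_index_eq not_Jt ts).
Qed.

Lemma hn_strongly_measurable (R : realType) (G : topologicalType) (n : nat)
    (g : 'I_n.+1 -> G) :
  strongly_measurable (@hn R G n g).
Proof. exact: (strongly_measurable_step n (g \o inord)). Qed.

Lemma in_N_everywhere (R : realType) (G : topologicalType) (U : set G)
    (delta : R) (z : R -> G) :
  0 < delta -> (forall t, U (z t)) -> in_N U delta z.
Proof.
move=> delta_gt0 Uz; rewrite /in_N (_ : [set t | _] = set0) ?measure0 ?lte_fin //.
by apply/seteqP; split => t // [_]; apply.
Qed.

Section Bracket.
Variables (R : realType) (G : topologicalType) (mul : G -> G -> G)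
  (inv : G -> G) (e : G).
Hypothesis mul_inv_r : forall z, mul z (inv z) = e.

Lemma cia_mul_inv (n : nat) (i : 'I_n.+1) (a : 'I_n -> G) (x y : G) k :
  mul (cia i a x k) (inv (cia i a y k)) = mul x (inv y) \/
  mul (cia i a x k) (inv (cia i a y k)) = e.
Proof. by rewrite /cia; case: unlift => [j|]; [right; exact: mul_inv_r | left]. Qed.

Lemma bracket_bounded (H : set ((R -> G) -> R)) :
  RUEB_L0 mul inv e H -> exists M, forall g, bracket H g -> forall x, `|g x| <= M.
Proof.
case=> _ [M HM] _; exists M => _ [f [Hf [n [i [a ->]]]]] x.
exact/HM/hn_strongly_measurable.
Qed.

Lemma bracket_equicontinuous (H : set ((R -> G) -> R)) :
  RUEB_L0 mul inv e H -> forall eps, 0 < eps -> exists U, nbhs e U /\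
    forall g x y, bracket H g -> U (mul x (inv y)) -> `|g x - g y| <= eps.
Proof.
case=> _ _ H_equi eps eps_gt0.
have [U [delta [U_open Ue delta_gt0 HU]]] := H_equi eps eps_gt0.
exists U; split; first exact: open_nbhs_nbhs.
move=> _ x y [f [Hf [n [i [a ->]]]]] Uxy.
apply: HU => //; [exact: hn_strongly_measurable.. |].
apply: (in_N_everywhere delta_gt0) => t.
by case: (cia_mul_inv i a x y (inord (step_index n t))) => ->.
Qed.

End Bracket.

Lemma RUEB_of_bounded_equicontinuous (R : realType) (G : topologicalType)
    (mul : G -> G -> G) (inv : G -> G) (e : G) (K : set (G -> R)) :
  (exists M, forall g, K g -> forall x, `|g x| <= M) ->
  (forall eps, 0 < eps -> exists U, nbhs e U /\
    forall g x y, K g -> U (mul x (inv y)) -> `|g x - g y| <= eps) ->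
  RUEB mul inv e K.
Proof.
move=> [M K_bounded] K_equi; split=> // [g Kg|]; last by exists M.
split; first by exists M; exact: K_bounded.
by move=> eps /K_equi[U [Ue HU]]; exists U; split => // x y; exact: HU.
Qed.

Theorem lemma4p3 (R : realType) (G : topologicalType) (mul : G -> G -> G)
    (inv : G -> G) (e : G) (HG : is_topgroup mul inv e)
    (H : set ((R -> G) -> R)) (HH : RUEB_L0 mul inv e H) :
  RUEB mul inv e (bracket H).
Proof.
have mul_inv_r z : mul z (inv z) = e by case: HG => _ _ /(_ z)[].
apply: RUEB_of_bounded_equicontinuous.
- exact: bracket_bounded HH.
- exact: (bracket_equicontinuous mul_inv_r HH).
Qed.
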